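(* Let $M$ be a $k\times k$ matrix (for some $k\ge1$) all of whose entries are positive integers, such that $M^2=3M$. Then $M$ is one of $$M_1=(3),\ M_2=\begin{pmatrix}2&1\\2&1\end{pmatrix},\ M_3=\begin{pmatrix}2&2\\1&1\end{pmatrix},\ M_4=\begin{pmatrix}1&1\\2&2\end{pmatrix},\ M_5=\begin{pmatrix}1&2\\1&2\end{pmatrix},\ M_6=\begin{pmatrix}1&1&1\\1&1&1\\1&1&1\end{pmatrix}.$$ *)

From HB Require Import structures.
From mathcomp Require Import all_boot all_order all_algebra.
Set Implicit Arguments. Unset Strict Implicit. Unset Printing Implicit Defensive.
Import Order.TTheory GRing.Theory Num.Theory.
Local Open Scope ring_scope.

Definition mx_of_rows (n : nat) (s : seq (seq int)) : 'M[int]_n :=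
  \matrix_(i < n, j < n) nth 0 (nth [::] s i) j.

Definition M1 : 'M[int]_1 := mx_of_rows 1 [:: [:: 3]].
Definition M2 : 'M[int]_2 := mx_of_rows 2 [:: [:: 2; 1]; [:: 2; 1]].
Definition M3 : 'M[int]_2 := mx_of_rows 2 [:: [:: 2; 2]; [:: 1; 1]].
Definition M4 : 'M[int]_2 := mx_of_rows 2 [:: [:: 1; 1]; [:: 2; 2]].
Definition M5 : 'M[int]_2 := mx_of_rows 2 [:: [:: 1; 2]; [:: 1; 2]].
Definition M6 : 'M[int]_3 :=
  mx_of_rows 3 [:: [:: 1; 1; 1]; [:: 1; 1; 1]; [:: 1; 1; 1]].

From HB Require Import structures.
From mathcomp Require Import all_boot all_order all_algebra zify.
Set Implicit Arguments. Unset Strict Implicit. Unset Printing Implicit Defensive.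
Import Order.TTheory GRing.Theory Num.Theory.
Local Open Scope ring_scope.

(* The (i,i) entry of M^2 = 3M reads m_ii (3 - m_ii) = sum_{l <> i} m_il m_li.
   Every product on the right is at least 1 while x (3 - x) <= 2 on the
   integers, so k <= 3, and for k = 3 every product m_il m_li is exactly 1,
   which forces all off-diagonal entries to be 1.  The cases k = 1, 2, 3 are
   then finished from a few entrywise equations. *)

Lemma mul_subr3_le2 (x : int) : x * (3 - x) <= 2.
Proof. have [] : x <= 1 \/ 2 <= x by lia. all: nia. Qed.

Section PositiveSqr3.

Variables (k : nat) (M : 'M[int]_k).
Hypothesis M_gt0 : forall i j, 0 < M i j.
Hypothesis sqrM : M *m M = 3%:Z *: M.

Lemma sqr3_entry i j : \sum_l M i l * M l j = 3 * M i j.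
Proof. by move/matrixP: sqrM => /(_ i j); rewrite !mxE. Qed.

Lemma cycle_excess_sum i :
  \sum_(l | l != i) (M i l * M l i - 1) = M i i * (3 - M i i) - (k.-1)%:R.
Proof.
have := sqr3_entry i i; rewrite (bigD1 i) //= => sqr_ii.
rewrite sumrB sumr_const cardC1 card_ord.
have -> : \sum_(l | l != i) M i l * M l i = 3 * M i i - M i i * M i i.
  by rewrite -sqr_ii addrC addrK.
by rewrite mulrBr mulrC.
Qed.

Lemma cycle_excess_ge0 i l : 0 <= M i l * M l i - 1.
Proof. by rewrite subr_ge0; have := M_gt0 i l; have := M_gt0 l i; nia. Qed.

Lemma dim_le3 (i : 'I_k) : (k <= 3)%N.
Proof.
have excess_ge0 : 0 <= \sum_(l | l != i) (M i l * M l i - 1).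
  by apply: sumr_ge0 => l _; apply: cycle_excess_ge0.
have /[!ler_nat] : (k.-1)%:R <= 2 :> int.
  by have := cycle_excess_sum i; have := mul_subr3_le2 (M i i); lia.
lia.
Qed.

Lemma offdiag_eq1 : k = 3%N -> forall i l, l != i -> M i l = 1.
Proof.
move=> k3 i l li.
have excess_ge0 l' : l' != i -> 0 <= M i l' * M l' i - 1 by move=> _; apply: cycle_excess_ge0.
have /(psumr_eq0P excess_ge0) /(_ l li) excess0 : \sum_(l | l != i) (M i l * M l i - 1) = 0.
  apply/eqP; rewrite eq_le sumr_ge0 // andbT.
  have k_pred : (k.-1)%:R = 2 :> int by rewrite k3.
  by rewrite cycle_excess_sum k_pred subr_le0 mul_subr3_le2.
by have := M_gt0 i l; have := M_gt0 l i; nia.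
Qed.
End PositiveSqr3.


Lemma big_ord2 (R : nmodType) (F : 'I_2 -> R) : \sum_(i < 2) F i = F 0 + F 1.
Proof. by rewrite !big_ord_recr big_ord0 /= add0r; congr (F _ + F _); apply: val_inj. Qed.

Lemma big_ord3 (R : nmodType) (F : 'I_3 -> R) : \sum_(i < 3) F i = F 0 + F 1 + F 2.
Proof. by rewrite !big_ord_recr big_ord0 /= add0r; congr (F _ + F _ + F _); apply: val_inj. Qed.

Lemma ord3_cases (i : 'I_3) : [\/ i = 0, i = 1 | i = 2].
Proof. by case: i => -[|[|[|//]]] ?; [constructor 1|constructor 2|constructor 3]; apply: val_inj. Qed.

Lemma mx_of_rows2 (A : 'M[int]_2) : A = mx_of_rows 2 [:: [:: A 0 0; A 0 1]; [:: A 1 0; A 1 1]].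
Proof. by apply/matrixP => -[[|[|//]] ?] [[|[|//]] ?]; rewrite mxE; congr (A _ _); apply: val_inj. Qed.

Lemma pos_sqr3_dim1 (M : 'M[int]_1) : (forall i j, 0 < M i j) -> M *m M = 3%:Z *: M -> M = M1.
Proof.
move=> M_gt0 sqrM; apply/matrixP => i j; rewrite /M1 /mx_of_rows mxE (ord1 i) (ord1 j) /=.
have := sqr3_entry sqrM 0 0; rewrite big_ord1 [ord0]ord1; have := M_gt0 0 0; nia.
Qed.

Lemma pos_sqr3_dim2 (M : 'M[int]_2) : (forall i j, 0 < M i j) -> M *m M = 3%:Z *: M ->
  M = M2 \/ M = M3 \/ M = M4 \/ M = M5.
Proof.
move=> M_gt0 sqrM.
have := sqr3_entry sqrM 0 0; have := sqr3_entry sqrM 0 1; rewrite !big_ord2 => sqr01 sqr00.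
have := M_gt0 0 0; have := M_gt0 0 1; have := M_gt0 1 0; have := M_gt0 1 1 => d_gt0 c_gt0 b_gt0 a_gt0.
have trace3 : M 0 0 + M 1 1 = 3 by nia.
have ad : (M 0 0 = 1 /\ M 1 1 = 2) \/ (M 0 0 = 2 /\ M 1 1 = 1) by lia.
have bc2 : M 0 1 * M 1 0 = 2 by nia.
have bc : (M 0 1 = 1 /\ M 1 0 = 2) \/ (M 0 1 = 2 /\ M 1 0 = 1) by nia.
rewrite [M]mx_of_rows2.
case: ad => -[-> ->]; case: bc => -[-> ->]; tauto.
Qed.

Lemma pos_sqr3_dim3 (M : 'M[int]_3) : (forall i j, 0 < M i j) -> M *m M = 3%:Z *: M -> M = M6.
Proof.
move=> M_gt0 sqrM.
have offdiag := offdiag_eq1 M_gt0 sqrM erefl.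
have diag i : M i i = 1.
  have := sqr3_entry sqrM 0 1; have := sqr3_entry sqrM 0 2.
  rewrite !big_ord3 (offdiag 0 1) ?(offdiag 0 2) ?(offdiag 2 1) ?(offdiag 1 2) // !mulr1 !mul1r.
  have := M_gt0 0 0; have := M_gt0 1 1; have := M_gt0 2 2.
  by case: (ord3_cases i) => ->; lia.
apply/matrixP => i j; rewrite /M6 /mx_of_rows mxE.
have -> : M i j = 1 by case: (eqVneq j i) => [->|/offdiag].
by case: (ord3_cases i) => ->; case: (ord3_cases j) => ->.
Qed.

Theorem mainTheorem8 (k : nat) (M : 'M[int]_k) :
  (1 <= k)%N ->
  (forall i j : 'I_k, 0 < M i j) ->
  M *m M = 3%:Z *: M ->
  (exists e : k = 1%N, castmx (e, e) M = M1) \/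
  (exists e : k = 2%N, castmx (e, e) M = M2 \/ castmx (e, e) M = M3 \/
                       castmx (e, e) M = M4 \/ castmx (e, e) M = M5) \/
  (exists e : k = 3%N, castmx (e, e) M = M6).
Proof.
move=> k_gt0 M_gt0 sqrM; have := dim_le3 M_gt0 sqrM (Ordinal k_gt0).
case: k M M_gt0 sqrM k_gt0 => [|[|[|[|k]]]] // M M_gt0 sqrM _ _.
- by left; exists erefl; rewrite castmx_id; apply: pos_sqr3_dim1.
- by right; left; exists erefl; rewrite castmx_id; apply: pos_sqr3_dim2.
- by right; right; exists erefl; rewrite castmx_id; apply: pos_sqr3_dim3.
Qed.
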